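(* Let $0\le\alpha\le1$ and let $a\in C(\mathbf{R})$ satisfy $\frac{a_1}{(1+|x|)^{\alpha}}\le a(x)\le \frac{a_2}{(1+|x|)^{\alpha}}$ for all $x\in\mathbf{R}$, with constants $a_1,a_2>0$, where in the case $\alpha=1$ it is assumed that $a_1>2$. Let $V\in C^1(\mathbf{R})$ be bounded with $V(x)>0$ and $xV'(x)\le0$ for all $x$. For positive constants $\varepsilon_1,\varepsilon_2,\varepsilon_3$ set $f(t)=\varepsilon_1(1+t)^2$, $g(t)=\varepsilon_2(1+t)$, $h(t,x)=\varepsilon_3(1+t)x\phi(x)$, where $\phi(x)=1$ for $|x|\le1$ and $\phi(x)=1/|x|$ for $|x|\ge1$, and let $$F_3(t,x)=g_{tt}(t)-g_t(t)a(x)-V(x)f_t(t)+2V(x)g(t)-V_x(x)h(t,x)-V(x)h_x(t,x).$$ Then there exist positive constants $\varepsilon_1,\varepsilon_2,\varepsilon_3$, $C$ and $t_0$ such that for all $t>t_0$ and all $x\in\mathbf{R}$ with $|x|\ne1$, $-F_3(t,x)\le C\,a(x)$. *)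

From Stdlib Require Import Reals.
From Coquelicot Require Import Coquelicot.
Open Scope R_scope.

Definition phi (x : R) : R := if Rle_dec (Rabs x) 1 then 1 else / Rabs x.

Definition fF (e1 t : R) : R := e1 * (1 + t) ^ 2.
Definition gF (e2 t : R) : R := e2 * (1 + t).
Definition hF (e3 t x : R) : R := e3 * (1 + t) * x * phi x.

Definition F3 (a V : R -> R) (e1 e2 e3 t x : R) : R :=
  Derive (Derive (gF e2)) t
  - Derive (gF e2) t * a x
  - V x * Derive (fF e1) t
  + 2 * V x * gF e2 t
  - Derive V x * hF e3 t x
  - V x * Derive (fun y => hF e3 t y) x.

(** For |x| <> 1 the function h(t, .) is locally linear (|x| < 1) or locally
    constant (|x| > 1), so h_x <= e3 (1 + t), while x V'(x) <= 0 makes V_x h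
    nonpositive.  Hence
      -F3 = e2 a + (2 e1 - 2 e2) V (1 + t) + V_x h + V h_x
          <= e2 a + (2 e1 + e3 - 2 e2) V (1 + t),
    and any choice with 2 e1 + e3 <= 2 e2 gives -F3 <= e2 a for all t >= -1. *)

From Stdlib Require Import Reals Lra.
From Coquelicot Require Import Coquelicot.
Open Scope R_scope.

Lemma phi_pos (x : R) : 0 < phi x.
Proof.
  unfold phi; destruct (Rle_dec (Rabs x) 1); [lra|].
  apply Rinv_0_lt_compat; lra.
Qed.

Lemma hF_inner (e3 t y : R) : -1 < y < 1 -> hF e3 t y = e3 * (1 + t) * y.
Proof.
  intros Hy; unfold hF, phi.
  destruct (Rle_dec (Rabs y) 1) as [_|Hgt]; [ring|].
  exfalso; apply Hgt, Rabs_le; lra.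
Qed.

Lemma hF_right (e3 t y : R) : 1 < y -> hF e3 t y = e3 * (1 + t).
Proof.
  intros Hy; unfold hF, phi; rewrite Rabs_pos_eq by lra.
  destruct (Rle_dec y 1); [lra|]. field; lra.
Qed.

Lemma hF_left (e3 t y : R) : y < -1 -> hF e3 t y = - (e3 * (1 + t)).
Proof.
  intros Hy; unfold hF, phi; rewrite Rabs_left by lra.
  destruct (Rle_dec (- y) 1); [lra|]. field; lra.
Qed.

Lemma Derive_hF_inner (e3 t x : R) :
  Rabs x < 1 -> Derive (fun y => hF e3 t y) x = e3 * (1 + t).
Proof.
  intros Hx; apply Rabs_def2 in Hx.
  apply is_derive_unique, (is_derive_ext_loc (fun y => e3 * (1 + t) * y)).
  - apply (locally_interval _ x (-1) 1); simpl; [lra | lra |].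
    intros y Hl Hr; symmetry; apply hF_inner; lra.
  - auto_derive; [exact I | ring].
Qed.

Lemma Derive_hF_outer (e3 t x : R) :
  1 < Rabs x -> Derive (fun y => hF e3 t y) x = 0.
Proof.
  intros Hx; apply is_derive_unique.
  destruct (Rle_lt_dec 0 x) as [Hpos|Hneg].
  - rewrite Rabs_pos_eq in Hx by lra.
    apply (is_derive_ext_loc (fun _ => e3 * (1 + t))).
    + apply (locally_interval _ x 1 p_infty); simpl; [lra | exact I |].
      intros y Hl _; symmetry; apply hF_right; exact Hl.
    + now auto_derive.
  - rewrite Rabs_left in Hx by lra.
    apply (is_derive_ext_loc (fun _ => - (e3 * (1 + t)))).
    + apply (locally_interval _ x m_infty (-1)); simpl; [exact I | lra |].
      intros y _ Hr; symmetry; apply hF_left; exact Hr.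
    + now auto_derive.
Qed.

Lemma Derive_hF_le (e3 t x : R) : 0 <= e3 * (1 + t) -> Rabs x <> 1 ->
  Derive (fun y => hF e3 t y) x <= e3 * (1 + t).
Proof.
  intros Hnonneg Hx.
  destruct (Rlt_or_le (Rabs x) 1) as [Hlt|Hge].
  - rewrite Derive_hF_inner by exact Hlt; lra.
  - rewrite Derive_hF_outer by lra; exact Hnonneg.
Qed.

Lemma Derive_gF (e2 t : R) : Derive (gF e2) t = e2.
Proof. apply is_derive_unique; unfold gF; auto_derive; [exact I | ring]. Qed.

Lemma Derive2_gF (e2 t : R) : Derive (Derive (gF e2)) t = 0.
Proof.
  rewrite (Derive_ext _ (fun _ => e2)) by apply Derive_gF.
  apply Derive_const.
Qed.

Lemma Derive_fF (e1 t : R) : Derive (fF e1) t = 2 * e1 * (1 + t).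
Proof. apply is_derive_unique; unfold fF; auto_derive; [exact I | ring]. Qed.

Lemma drift_hF_nonpos (V : R -> R) (e3 t x : R) :
  0 <= e3 * (1 + t) -> x * Derive V x <= 0 -> Derive V x * hF e3 t x <= 0.
Proof.
  intros Hnonneg HxV; unfold hF.
  replace (Derive V x * (e3 * (1 + t) * x * phi x))
    with ((x * Derive V x) * (e3 * (1 + t) * phi x)) by ring.
  apply Rmult_le_0_r; [exact HxV|].
  apply Rmult_le_pos; [exact Hnonneg | left; apply phi_pos].
Qed.

Lemma neg_F3_le (a V : R -> R) (e1 e2 e3 t x : R) :
  0 <= e3 -> 2 * e1 + e3 <= 2 * e2 -> -1 <= t -> 0 <= V x ->
  x * Derive V x <= 0 -> Rabs x <> 1 ->
  - F3 a V e1 e2 e3 t x <= e2 * a x.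
Proof.
  intros He3 He Ht HV HxV Hx.
  assert (Hnonneg : 0 <= e3 * (1 + t)) by (apply Rmult_le_pos; lra).
  pose proof (drift_hF_nonpos V e3 t x Hnonneg HxV) as Hdrift.
  pose proof (Derive_hF_le e3 t x Hnonneg Hx) as Hhx.
  unfold F3; rewrite Derive2_gF, Derive_gF, Derive_fF; unfold gF.
  assert (Hcoef : 0 <= (2 * e2 - 2 * e1 - e3) * (1 + t))
    by (apply Rmult_le_pos; lra).
  nra.
Qed.

Theorem lemma2p3 (alpha a1 a2 : R) (a V : R -> R) :
  0 <= alpha <= 1 ->
  0 < a1 -> 0 < a2 ->
  (alpha = 1 -> 2 < a1) ->
  (forall x, continuous a x) ->
  (forall x, a1 / Rpower (1 + Rabs x) alpha <= a x
             /\ a x <= a2 / Rpower (1 + Rabs x) alpha) ->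
  (forall x, ex_derive V x) ->
  (forall x, continuous (Derive V) x) ->
  (exists M, forall x, Rabs (V x) <= M) ->
  (forall x, 0 < V x) ->
  (forall x, x * Derive V x <= 0) ->
  exists e1 e2 e3 C t0 : R,
    0 < e1 /\ 0 < e2 /\ 0 < e3 /\ 0 < C /\ 0 < t0 /\
    forall t x, t0 < t -> Rabs x <> 1 ->
      - F3 a V e1 e2 e3 t x <= C * a x.
Proof.
  intros _ _ _ _ _ _ _ _ _ HV HxV.
  exists 1, 2, 1, 2, 1; do 5 (split; [lra|]).
  intros t x Ht Hx.
  apply neg_F3_le; [lra | lra | lra | left; apply HV | apply HxV | exact Hx].
Qed.
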